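(* Let $(G;+)$ be a commutative groupoid and let $M, M'$ be multisets over $G$ with $|M| = |M'| \geq 5$. Then the deck of $M$ equals the deck of $M'$ if and only if $M = M'$. In particular, every multiset of cardinality at least $5$ over any commutative groupoid is reconstructible.
   Context: A (finite) multiset $M$ over a set $X$ is a function $\mathbf{1}_M \colon X \to \mathbb{N}$ with finite support; $|M| = \sum_x \mathbf{1}_M(x)$ is its cardinality. Multiset sum $\uplus$ adds multiplicities; the difference $M \setminus M'$ has multiplicities $\max(\mathbf{1}_M(x)-\mathbf{1}_{M'}(x),0)$. $\langle x_1,\dots,x_k\rangle$ denotes the multiset in which each element occurs as often as it appears in the list. A commutative groupoid is a set $G$ with a commutative binary operation $+$ (not necessarily associative). Cards and deck: for a multiset $M$ of cardinality $n \geq 2$ over $G$, fix $(m_1,\dots,m_n) \in G^n$ with $M = \langle m_1,\dots,m_n\rangle$; for $I = \{i,j\}$, $1 \le i<j \le n$, the card $M_I$ is $M \setminus \langle m_i, m_j\rangle \uplus \langle m_i + m_j\rangle$. The deck of $M$ is the multiset $\langle M_I : I \rangle$ of all $\binom{n}{2}$ cards (independent of the chosen tuple). $M$ is reconstructible if every multiset $M'$ over $G$ with the same deck equals $M$. *)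

(* Multisets over an arbitrary type G are represented by lists
   taken up to permutation (Stdlib Permutation); no decidable equality needed. *)
From Stdlib Require Import List Permutation.
Import ListNotations.

Fixpoint picks {G : Type} (l : list G) : list (G * list G) :=
  match l with
  | [] => []
  | x :: t => (x, t) :: map (fun p => (fst p, x :: snd p)) (picks t)
  end.

(* deck op l : the list of all C(n,2) cards M_I, one for each unordered pair
   I = {i,j} of positions i < j of l: the two entries are removed and their
   sum (op) is added. *)
Fixpoint deck {G : Type} (op : G -> G -> G) (l : list G) : list (list G) :=
  match l with
  | [] => []
  | x :: t => map (fun p => op x (fst p) :: snd p) (picks t)
              ++ map (cons x) (deck op t)
  end.

(* Equality of multisets of multisets: D and D' agree up to reordering
   the cards, each card being taken up to permutation. *)
Definition mset_mset_eq {G : Type} (D D' : list (list G)) : Prop :=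
  exists D'', Permutation D' D'' /\ Forall2 (@Permutation G) D D''.

Definition same_deck {G : Type} (op : G -> G -> G) (M M' : list G) : Prop :=
  mset_mset_eq (deck op M) (deck op M').

Definition reconstructible {G : Type} (op : G -> G -> G) (M : list G) : Prop :=
  forall M' : list G, same_deck op M M' -> Permutation M M'.

From Stdlib Require Import List Permutation Arith Lia ClassicalEpsilon Classical.
Import ListNotations.

(* For a value x, let c(x) be the multiplicity of x in M (|M| = n) and s(x)
   the number of pairs i < j with m_i + m_j = x.  Counting the occurrences of
   x over all cards gives  total(x) = c(x)·(n-1)(n-2)/2 + s(x),  where
   0 <= s(x) <= n(n-1)/2 and, for two distinct values, s(x) + s(z) <= n(n-1)/2.
   If M and M' have the same deck, these totals agree for every x.  For n >= 5
   this forces: whenever c(x) < c'(x), then c'(x) = c(x) + 1 and s(x) exceeds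
   s'(x) by (n-1)(n-2)/2; such a "deficit" value x is unique, and likewise for
   the reverse direction.  As |M| = |M'|, a deficit x comes with a surplus
   y <> x and then x :: M and y :: M' are the same multiset; comparing the pair
   counts of x on both sides bounds s(x) - s'(x) by n, contradicting
   (n-1)(n-2)/2 > n.  Hence M and M' have the same multiplicities. *)

(* Lists agreeing up to reordering and a pointwise relation R; for
   R = Permutation this is exactly mset_mset_eq. *)
Definition perm_rel {A} (R : A -> A -> Prop) (P Q : list A) : Prop :=
  exists Q', Permutation Q Q' /\ Forall2 R P Q'.

Section PermRel.
Variables (A : Type) (R : A -> A -> Prop).
Hypothesis R_refl : forall a, R a a.
Hypothesis R_trans : forall a b c, R a b -> R b c -> R a c.

Lemma Forall2_rel_refl (P : list A) : Forall2 R P P.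
Proof. induction P; constructor; auto. Qed.

Lemma Forall2_rel_trans (P Q S : list A) :
  Forall2 R P Q -> Forall2 R Q S -> Forall2 R P S.
Proof.
  intros H1; revert S; induction H1; intros S H2; inversion H2; subst;
    constructor; eauto.
Qed.

Lemma perm_rel_Forall2 (P Q : list A) : Forall2 R P Q -> perm_rel R P Q.
Proof. intros H; exists Q; split; [apply Permutation_refl | exact H]. Qed.

Lemma perm_rel_perm (P Q : list A) : Permutation P Q -> perm_rel R P Q.
Proof.
  intros H; exists P; split; [apply Permutation_sym, H | apply Forall2_rel_refl].
Qed.

Lemma perm_rel_trans (P Q S : list A) :
  perm_rel R P Q -> perm_rel R Q S -> perm_rel R P S.
Proof.
  intros [Q' [HQ HPQ]] [S' [HS HQS]].
  destruct (Permutation_Forall2 HQ HQS) as [S'' [HS' HQS']].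
  exists S''; split; [eapply Permutation_trans; eauto | eapply Forall2_rel_trans; eauto].
Qed.

Lemma perm_rel_app (P Q P' Q' : list A) :
  perm_rel R P Q -> perm_rel R P' Q' -> perm_rel R (P ++ P') (Q ++ Q').
Proof.
  intros [X [H1 H2]] [Y [H3 H4]]; exists (X ++ Y); split.
  - apply Permutation_app; auto.
  - apply Forall2_app; auto.
Qed.

Lemma perm_rel_cons (a b : A) (P Q : list A) :
  R a b -> perm_rel R P Q -> perm_rel R (a :: P) (b :: Q).
Proof.
  intros H [X [H1 H2]]; exists (b :: X); split; [apply perm_skip; auto | constructor; auto].
Qed.
End PermRel.

Lemma perm_rel_map {A B} (R : A -> A -> Prop) (S : B -> B -> Prop) (f : A -> B) :
  (forall a b, R a b -> S (f a) (f b)) ->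
  forall P Q, perm_rel R P Q -> perm_rel S (map f P) (map f Q).
Proof.
  intros Hf P Q [X [H1 H2]]; exists (map f X); split.
  - apply Permutation_map; auto.
  - clear H1; induction H2; constructor; auto.
Qed.

Lemma Forall2_map_pointwise {A B} (R : B -> B -> Prop) (f g : A -> B) :
  (forall p, R (f p) (g p)) -> forall P, Forall2 R (map f P) (map g P).
Proof. intros H P; induction P; constructor; auto. Qed.

Section DeckInvariance.
Variables (G : Type) (op : G -> G -> G).
Hypothesis op_comm : forall x y, op x y = op y x.

Definition pick_rel (p q : G * list G) : Prop :=
  fst p = fst q /\ Permutation (snd p) (snd q).

Lemma pick_rel_refl (p : G * list G) : pick_rel p p.
Proof. split; auto. Qed.

Lemma pick_rel_trans (p q r : G * list G) : pick_rel p q -> pick_rel q r -> pick_rel p r.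
Proof. intros [H1 H2] [H3 H4]; split; [congruence | eapply Permutation_trans; eauto]. Qed.

Lemma picks_perm (l l' : list G) :
  Permutation l l' -> perm_rel pick_rel (picks l) (picks l').
Proof.
  induction 1.
  - apply perm_rel_Forall2; constructor.
  - apply perm_rel_cons; [split; simpl; auto |].
    apply perm_rel_map with (R := pick_rel); auto.
    intros [a1 a2] [b1 b2] [H1 H2]; split; simpl in *; auto.
  - simpl; rewrite !map_map.
    eapply perm_rel_trans; [apply pick_rel_trans | |].
    + apply perm_rel_perm; [apply pick_rel_refl | apply perm_swap].
    + apply perm_rel_Forall2.
      do 2 (constructor; [apply pick_rel_refl |]).
      apply Forall2_map_pointwise; intros [a b]; split; simpl; auto; apply perm_swap.
  - eapply perm_rel_trans; eauto; apply pick_rel_trans.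
Qed.

(* The deck of y :: x :: l, split by the role of the two leading entries;
   used to handle a swap of the first two positions. *)
Lemma deck_cons2 (y x : G) (l : list G) :
  deck op (y :: x :: l) = (op y x :: l) ::
    (map (fun p => op y (fst p) :: x :: snd p) (picks l)
     ++ map (fun p => y :: op x (fst p) :: snd p) (picks l)
     ++ map (fun c => y :: x :: c) (deck op l)).
Proof. simpl; rewrite map_app, !map_map; reflexivity. Qed.

(* The deck only depends on the multiset: permuted lists have the same deck.
   This is where commutativity of op is used. *)
Lemma deck_perm (l l' : list G) : Permutation l l' -> same_deck op l l'.
Proof.
  unfold same_deck, mset_mset_eq; fold (perm_rel (@Permutation G)).
  assert (Ptrans : forall a b c : list G, Permutation a b -> Permutation b c -> Permutation a c)
    by (intros; eapply Permutation_trans; eauto).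
  induction 1.
  - apply perm_rel_Forall2; constructor.
  - apply perm_rel_app.
    + apply perm_rel_map with (R := pick_rel); [| apply picks_perm; auto].
      intros [a1 a2] [b1 b2] [H1 H2]; simpl in *; subst; auto.
    + apply perm_rel_map with (R := @Permutation G); auto.
  - rewrite !deck_cons2.
    eapply perm_rel_trans; [exact Ptrans | |].
    + apply perm_rel_Forall2 with (Q := (op x y :: l) ::
        (map (fun p => x :: op y (fst p) :: snd p) (picks l)
         ++ map (fun p => op x (fst p) :: y :: snd p) (picks l)
         ++ map (fun c => x :: y :: c) (deck op l))).
      constructor; [rewrite op_comm; auto |].
      repeat apply Forall2_app; apply Forall2_map_pointwise; intros; apply perm_swap.
    + apply perm_rel_perm; [intros; apply Permutation_refl |].
      apply perm_skip; rewrite !app_assoc.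
      apply Permutation_app_tail, Permutation_app_comm.
  - eapply perm_rel_trans; eauto.
Qed.
End DeckInvariance.

Section Counting.
Context {G : Type} (op : G -> G -> G).

Definition eq_dec (x y : G) : {x = y} + {x <> y} := excluded_middle_informative (x = y).

Definition mult (x : G) (l : list G) : nat := count_occ eq_dec l x.
Definition indic (x y : G) : nat := if eq_dec y x then 1 else 0.

Definition card_total (x : G) (D : list (list G)) : nat := list_sum (map (mult x) D).

Fixpoint pair_sums (x : G) (l : list G) : nat :=
  match l with
  | [] => 0
  | h :: t => mult x (map (op h) t) + pair_sums x t
  end.

Lemma mult_cons (x h : G) (t : list G) : mult x (h :: t) = indic x h + mult x t.
Proof. unfold mult, indic; simpl; destruct (eq_dec h x); reflexivity. Qed.

Lemma indic_self (x : G) : indic x x = 1.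
Proof. unfold indic; destruct (eq_dec x x); congruence. Qed.

Lemma indic_other (x y : G) : y <> x -> indic x y = 0.
Proof. unfold indic; destruct (eq_dec y x); congruence. Qed.

Lemma mult_bound (x : G) (l : list G) : mult x l <= length l.
Proof. apply count_occ_bound. Qed.

(* Distinct values occupy disjoint positions. *)
Lemma mult2_bound (x z : G) (l : list G) : x <> z -> mult x l + mult z l <= length l.
Proof.
  intros Hne; induction l as [|h t IH]; [unfold mult; simpl; lia |].
  cbn [length]; rewrite !mult_cons; unfold indic.
  destruct (eq_dec h x), (eq_dec h z); subst; try congruence; lia.
Qed.

Lemma mult_perm (x : G) (l l' : list G) : Permutation l l' -> mult x l = mult x l'.
Proof. intros H; apply (proj1 (Permutation_count_occ eq_dec l l') H). Qed.

Lemma mult_as_sum (x : G) (l : list G) : mult x l = list_sum (map (indic x) l).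
Proof. induction l; [reflexivity |]. cbn [map list_sum]; rewrite mult_cons, IHl; reflexivity. Qed.

Lemma picks_fst (t : list G) : map fst (picks t) = t.
Proof. induction t; simpl; auto. rewrite map_map; simpl; f_equal; exact IHt. Qed.

Lemma length_picks (t : list G) : length (picks t) = length t.
Proof. induction t; simpl; auto. rewrite length_map; auto. Qed.

Lemma list_sum_map_add {A} (f g : A -> nat) (L : list A) :
  list_sum (map (fun a => f a + g a) L) = list_sum (map f L) + list_sum (map g L).
Proof. induction L; simpl; lia. Qed.

Lemma list_sum_map_const {A} (k : nat) (L : list A) :
  list_sum (map (fun _ => k) L) = k * length L.
Proof. induction L; simpl; lia. Qed.

(* Each element of t is missing from exactly one of the remainders. *)
Lemma sum_mult_picks (x : G) (t : list G) :
  list_sum (map (fun p => mult x (snd p)) (picks t)) + mult x t = length t * mult x t.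
Proof.
  induction t as [|y t IH]; [unfold mult; simpl; lia |].
  cbn [picks map length snd fst list_sum fold_right]; rewrite map_map; cbn [snd fst].
  rewrite (map_ext _ (fun a => indic x y + mult x (snd a))) by (intros; apply mult_cons).
  rewrite list_sum_map_add, list_sum_map_const, length_picks, !mult_cons.
  nia.
Qed.

Lemma length_deck (l : list G) : 2 * length (deck op l) + length l = length l * length l.
Proof.
  induction l as [|h t IH]; simpl; auto.
  rewrite length_app, !length_map, length_picks; nia.
Qed.

(* The counting identity  total(x) = c(x)·(n-1)(n-2)/2 + s(x),  doubled and
   written without subtraction. *)
Lemma card_total_deck (x : G) (l : list G) :
  2 * card_total x (deck op l) + 3 * length l * mult x l
  = mult x l * (length l * length l + 2) + 2 * pair_sums x l.
Proof.
  induction l as [|h t IH]; [unfold card_total, mult; simpl; lia |].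
  cbn [deck pair_sums length]; unfold card_total in *.
  rewrite map_app, list_sum_app, !map_map.
  rewrite (map_ext (fun p => mult x (op h (fst p) :: snd p))
             (fun p => indic x (op h (fst p)) + mult x (snd p))) by (intros; apply mult_cons).
  rewrite (map_ext (fun c => mult x (h :: c)) (fun c => indic x h + mult x c))
    by (intros; apply mult_cons).
  rewrite !list_sum_map_add, list_sum_map_const.
  assert (Hsums : list_sum (map (fun p => indic x (op h (fst p))) (picks t))
                  = mult x (map (op h) t)).
  { rewrite mult_as_sum, map_map, <- (map_map fst (fun y => indic x (op h y))), picks_fst.
    reflexivity. }
  rewrite Hsums, mult_cons.
  pose proof (sum_mult_picks x t); pose proof (length_deck t); nia.
Qed.

Lemma pair_sums_bound (x : G) (l : list G) :
  2 * pair_sums x l + length l <= length l * length l.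
Proof.
  induction l as [|h t IH]; simpl; auto.
  pose proof (mult_bound x (map (op h) t)) as B; rewrite length_map in B; nia.
Qed.

Lemma pair_sums2_bound (x z : G) (l : list G) : x <> z ->
  2 * (pair_sums x l + pair_sums z l) + length l <= length l * length l.
Proof.
  intros Hne; induction l as [|h t IH]; simpl; auto.
  pose proof (mult2_bound x z (map (op h) t) Hne) as B; rewrite length_map in B; nia.
Qed.

Lemma pair_sums_perm (op_comm : forall x y, op x y = op y x) (x : G) (l l' : list G) :
  Permutation l l' -> pair_sums x l = pair_sums x l'.
Proof.
  induction 1; cbn [pair_sums map].
  - reflexivity.
  - rewrite IHPermutation; f_equal; apply mult_perm, Permutation_map; auto.
  - rewrite !mult_cons, (op_comm x0 y); lia.
  - congruence.
Qed.

Lemma card_total_same_deck (M M' : list G) :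
  same_deck op M M' -> forall x, card_total x (deck op M) = card_total x (deck op M').
Proof.
  intros [D'' [Hp Hf]] x; unfold card_total.
  rewrite (Permutation_list_sum (Permutation_map (mult x) Hp)).
  clear Hp; induction Hf; cbn [map list_sum fold_right]; auto.
  rewrite (mult_perm x _ _ H); f_equal; exact IHHf.
Qed.

(* The deck size n(n-1)/2 determines n as soon as n >= 2. *)
Lemma length_same_deck (M M' : list G) :
  2 <= length M -> same_deck op M M' -> length M = length M'.
Proof.
  intros H2 [D'' [Hp Hf]].
  pose proof (Permutation_length Hp); pose proof (Forall2_length Hf).
  pose proof (length_deck M); pose proof (length_deck M').
  destruct (Nat.lt_total (length M) (length M')) as [Hl | [He | Hl]]; auto; nia.
Qed.

Lemma perm_of_swap (x y : G) (M M' : list G) : x <> y ->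
  mult x M' = S (mult x M) -> mult y M = S (mult y M') ->
  (forall z, z <> x -> z <> y -> mult z M = mult z M') ->
  Permutation (x :: M) (y :: M').
Proof.
  intros Hxy Ex Ey Hothers.
  apply (Permutation_count_occ eq_dec); intros z; fold (mult z (x :: M)) (mult z (y :: M')).
  rewrite !mult_cons.
  destruct (eq_dec x z) as [<- | Hxz]; [rewrite indic_self, indic_other by congruence; lia |].
  destruct (eq_dec y z) as [<- | Hyz]; [rewrite indic_self, indic_other by congruence; lia |].
  rewrite !indic_other, Hothers by congruence; reflexivity.
Qed.

Lemma length_le_of_mult_le (l l' : list G) :
  (forall y, mult y l <= mult y l') -> length l <= length l'.
Proof.
  revert l'; induction l as [|h t IH]; intros l' H; [simpl; lia |].
  assert (Hin : In h l').
  { apply (count_occ_In eq_dec); specialize (H h); fold (mult h l').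
    rewrite mult_cons, indic_self in H; lia. }
  destruct (in_split _ _ Hin) as [l1 [l2 ->]].
  assert (Hp : Permutation (l1 ++ h :: l2) (h :: l1 ++ l2))
    by apply Permutation_sym, Permutation_middle.
  rewrite (Permutation_length Hp); cbn [length]; apply le_n_S, IH.
  intros y; specialize (H y); rewrite (mult_perm y _ _ Hp), !mult_cons in H; lia.
Qed.
End Counting.

Lemma deficit_arith (c c' s s' n T : nat) : 5 <= n ->
  2 * T + 3 * n * c = c * (n * n + 2) + 2 * s ->
  2 * T + 3 * n * c' = c' * (n * n + 2) + 2 * s' ->
  2 * s + n <= n * n -> c < c' ->
  c' = S c /\ 2 * s + 3 * n = 2 * s' + n * n + 2.
Proof.
  intros H5 E E' B Hlt.
  destruct (Nat.le_gt_cases c' (S c)) as [Hle | Hgt].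
  - assert (c' = S c) by lia; subst c'; split; [reflexivity | nia].
  - exfalso; destruct (Nat.le_exists_sub (S (S c)) c' Hgt) as [d [-> _]]; nia.
Qed.

Section Deficit.
Context {G : Type} (op : G -> G -> G).
Hypothesis op_comm : forall x y, op x y = op y x.
Variable n : nat.
Hypothesis n_ge5 : 5 <= n.

Definition same_totals (M M' : list G) : Prop :=
  length M = n /\ length M' = n /\
  forall x, card_total x (deck op M) = card_total x (deck op M').

Lemma same_totals_sym (M M' : list G) : same_totals M M' -> same_totals M' M.
Proof. intros [H1 [H2 H3]]; repeat split; auto. Qed.

Lemma deficit_gap (M M' : list G) (x : G) :
  same_totals M M' -> mult x M < mult x M' ->
  mult x M' = S (mult x M)
  /\ 2 * pair_sums op x M + 3 * n = 2 * pair_sums op x M' + n * n + 2.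
Proof.
  intros [HM [HM' HT]] Hlt.
  pose proof (card_total_deck op x M) as E; pose proof (card_total_deck op x M') as E'.
  pose proof (pair_sums_bound op x M) as B.
  rewrite HT, HM in E; rewrite HM in B; rewrite HM' in E'.
  eapply deficit_arith; eauto.
Qed.

(* Two distinct deficit values would need more pairs than M has. *)
Lemma deficit_unique (M M' : list G) (x z : G) :
  same_totals M M' -> mult x M < mult x M' -> mult z M < mult z M' -> x = z.
Proof.
  intros HT Hx Hz; destruct (eq_dec x z) as [| Hne]; [assumption | exfalso].
  destruct (deficit_gap M M' x HT Hx) as [_ Sx].
  destruct (deficit_gap M M' z HT Hz) as [_ Sz].
  pose proof (pair_sums2_bound op x z M Hne) as B; destruct HT as [HM _].
  rewrite HM in B; nia.
Qed.

(* No value can have a deficit.  Otherwise, with y the compensating surplus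
   value, x :: M and y :: M' are the same multiset, whence s(x) <= s'(x) + n. *)
Lemma no_deficit (M M' : list G) (x : G) :
  same_totals M M' -> ~ mult x M < mult x M'.
Proof.
  intros HT Hx.
  destruct (deficit_gap M M' x HT Hx) as [Ex Sx].
  pose proof HT as [HM [HM' _]].
  assert (Hsurplus : exists y, mult y M' < mult y M).
  { apply NNPP; intros Hn.
    assert (Hdom : forall y, mult y (x :: M) <= mult y M').
    { intros y; rewrite mult_cons.
      destruct (eq_dec x y) as [<- | Hxy]; [rewrite indic_self; lia |].
      rewrite indic_other by exact Hxy.
      apply Nat.nlt_ge; intros Hy; apply Hn; eauto. }
    pose proof (length_le_of_mult_le (x :: M) M' Hdom); simpl in *; lia. }
  destruct Hsurplus as [y Hy].
  destruct (deficit_gap M' M y (same_totals_sym M M' HT) Hy) as [Ey _].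
  assert (Hxy : x <> y) by (intros ->; lia).
  assert (Hothers : forall z, z <> x -> z <> y -> mult z M = mult z M').
  { intros z Hzx Hzy.
    destruct (Nat.lt_total (mult z M) (mult z M')) as [Hl | [He | Hl]]; auto; exfalso.
    - exact (Hzx (eq_sym (deficit_unique M M' x z HT Hx Hl))).
    - exact (Hzy (eq_sym (deficit_unique M' M y z (same_totals_sym M M' HT) Hy Hl))). }
  pose proof (perm_of_swap x y M M' Hxy Ex Ey Hothers) as Hswap.
  pose proof (pair_sums_perm op op_comm x _ _ Hswap) as Hs; cbn [pair_sums] in Hs.
  pose proof (mult_bound x (map (op y) M')) as B; rewrite length_map, HM' in B.
  nia.
Qed.
End Deficit.

Theorem mainTheorem3 (G : Type) (op : G -> G -> G)
  (op_comm : forall x y : G, op x y = op y x) :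
  (forall M M' : list G, length M = length M' -> 5 <= length M ->
     (same_deck op M M' <-> Permutation M M'))
  /\ (forall M : list G, 5 <= length M -> reconstructible op M).
Proof.
  assert (Hiff : forall M M' : list G, length M = length M' -> 5 <= length M ->
            (same_deck op M M' <-> Permutation M M')).
  { intros M M' Hl H5; split; [| apply deck_perm; exact op_comm].
    intros Hd.
    assert (HT : same_totals op (length M) M M')
      by (repeat split; auto; apply card_total_same_deck, Hd).
    apply (Permutation_count_occ eq_dec); intros z; fold (mult z M) (mult z M').
    destruct (Nat.lt_total (mult z M) (mult z M')) as [Hlt | [He | Hlt]]; auto; exfalso.
    - exact (no_deficit op op_comm (length M) H5 M M' z HT Hlt).
    - exact (no_deficit op op_comm (length M) H5 M' M z (same_totals_sym op _ M M' HT) Hlt). }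
  split; [exact Hiff |].
  intros M H5 M' Hd; apply Hiff; auto.
  apply (length_same_deck op); [lia | exact Hd].
Qed.
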